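(* For every set of names $\rho$, active context $\mathcal C[\cdot]$, name $a$, prefix $\alpha_a$ with subject $a$, and process $Q$: if $\rho\vdash\mathcal C[\alpha_a.Q]$ and $a\notin\rho$, then $\mathrm{auth}(\mathcal C[\cdot],a)$ holds (is $\mathit{true}$).
   Context: Let $\mathcal N$ be a countable set of names. Processes are generated by $P,Q ::= 0 \mid P\mid Q \mid (\nu a)P \mid (a)P \mid \alpha.P$, where $(\nu a)P$ is name restriction (binding $a$), $(a)P$ is the authorization scope ($a$ not bound), and prefixes are $\alpha ::= \overline{a}\langle b\rangle$ (output) $\mid a(x)$ (input, binding $x$) $\mid \overline{a}\langle\!\langle b\rangle\!\rangle$ (send authorization for $b$ on $a$) $\mid a\langle\!\langle b\rangle\!\rangle$ (receive authorization for $b$ on $a$; $b$ not bound). For a name $a$, $\alpha_a$ denotes any prefix of one of the forms $\overline{a}\langle b\rangle$, $a(x)$, $\overline{a}\langle\!\langle b\rangle\!\rangle$, $a\langle\!\langle b\rangle\!\rangle$. Active contexts: $\mathcal C[\cdot] ::= \cdot \mid P\mid\mathcal C[\cdot] \mid (\nu a)\mathcal C[\cdot] \mid (a)\mathcal C[\cdot]$, and $\mathcal C[R]$ is the result of filling the hole with $R$. The predicate $\mathrm{auth}(\mathcal C[\cdot],a)$ is defined by: $\mathit{false}$ if $\mathcal C[\cdot]=\cdot$; $\mathit{true}$ if $\mathcal C[\cdot]=(a)\mathcal C'[\cdot]$; $\mathrm{auth}(\mathcal C'[\cdot],a)$ if $\mathcal C[\cdot]=(b)\mathcal C'[\cdot]$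 with $a\neq b$, or $\mathcal C[\cdot]=P\mid\mathcal C'[\cdot]$, or $\mathcal C[\cdot]=(\nu b)\mathcal C'[\cdot]$. The typing judgment $\rho\vdash P$ ($\rho$ a set of names) is the least relation closed under the rules: $\emptyset\vdash 0$; if $\rho_1\vdash P$ and $\rho_2\vdash Q$ then $\rho_1\cup\rho_2\vdash P\mid Q$; if $\rho\vdash P$ and $a\notin\rho$ then $\rho\vdash(\nu a)P$; if $\rho\vdash P$ then $\rho\setminus\{a\}\vdash(a)P$; if $\rho\vdash P$ then $\rho\cup\{a\}\vdash\overline{a}\langle b\rangle.P$; if $\rho\vdash P$ and $x\notin\rho$ then $\rho\cup\{a\}\vdash a(x).P$; if $\rho\vdash P$ and $b\notin\rho$ then $\rho\cup\{a,b\}\vdash\overline{a}\langle\!\langle b\rangle\!\rangle.P$; if $\rho\vdash P$ then $(\rho\setminus\{b\})\cup\{a\}\vdash a\langle\!\langle b\rangle\!\rangle.P$. *)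

From HB Require Import structures.
From mathcomp Require Import all_boot.
From mathcomp Require Import finmap.
Set Implicit Arguments. Unset Strict Implicit. Unset Printing Implicit Defensive.
Local Open Scope fset_scope.

Definition name := nat.

Inductive pfx : Type :=
  | Out   : name -> name -> pfx
  | In    : name -> name -> pfx   (* a(x)   input, binds x *)
  | SendA : name -> name -> pfx
  | RecvA : name -> name -> pfx.

Definition subj (al : pfx) : name :=
  match al with Out a _ | In a _ | SendA a _ | RecvA a _ => a end.

Inductive proc : Type :=
  | Nil  : proc
  | Par  : proc -> proc -> proc
  | Res  : name -> proc -> proc
  | Auth : name -> proc -> proc
  | Pre  : pfx -> proc -> proc.

Inductive ctx : Type :=
  | Hole  : ctx
  | CPar  : proc -> ctx -> ctx
  | CRes  : name -> ctx -> ctx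
  | CAuth : name -> ctx -> ctx.

Fixpoint fill (C : ctx) (R : proc) : proc :=
  match C with
  | Hole => R
  | CPar P C' => Par P (fill C' R)
  | CRes b C' => Res b (fill C' R)
  | CAuth b C' => Auth b (fill C' R)
  end.

Fixpoint auth (C : ctx) (a : name) : bool :=
  match C with
  | Hole => false
  | CAuth b C' => if b == a then true else auth C' a
  | CPar _ C' => auth C' a
  | CRes _ C' => auth C' a
  end.

Inductive typed : {fset name} -> proc -> Prop :=
  | T_Nil : typed fset0 Nil
  | T_Par : forall r1 r2 P Q, typed r1 P -> typed r2 Q -> typed (r1 `|` r2) (Par P Q)
  | T_Res : forall r a P, typed r P -> a \notin r -> typed r (Res a P)
  | T_Auth : forall r a P, typed r P -> typed (r `\ a) (Auth a P)
  | T_Out : forall r a b P, typed r P -> typed (a |` r) (Pre (Out a b) P)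
  | T_In : forall r a x P, typed r P -> x \notin r -> typed (a |` r) (Pre (In a x) P)
  | T_SendA : forall r a b P, typed r P -> b \notin r ->
      typed (a |` (b |` r)) (Pre (SendA a b) P)
  | T_RecvA : forall r a b P, typed r P -> typed (a |` (r `\ b)) (Pre (RecvA a b) P).

From mathcomp Require Import all_boot finmap.
Local Open Scope fset_scope.

(* A prefix puts its subject into the type, and only an authorization scope
   (a) can remove a name on the way out of an active context. *)

Lemma typed_pre_subj (rho : {fset name}) (al : pfx) (Q : proc) :
  typed rho (Pre al Q) -> subj al \in rho.
Proof. by move=> Ht; inversion Ht; rewrite /= fset1U1. Qed.

Lemma typed_fill_subj_or_auth (C : ctx) (rho : {fset name}) (al : pfx) (Q : proc) :
  typed rho (fill C (Pre al Q)) -> (subj al \in rho) || auth C (subj al).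
Proof.
elim: C rho => [|P C IH|b C IH|b C IH] rho /= Ht.
- by apply/orP; left; apply: typed_pre_subj Ht.
- inversion Ht as [|r1 r2 P' Q' _ HC| | | | | |]; subst.
  by case/orP: (IH _ HC) => [Hin|->]; rewrite ?orbT // inE Hin orbT.
- by inversion Ht as [| |r b' P' HC _| | | | |]; subst; apply: IH.
- inversion Ht as [| | |r b' P' HC| | | |]; subst.
  have [->|neq_b] := eqVneq b (subj al); first by rewrite orbT.
  by case/orP: (IH _ HC) => [Hin|->]; rewrite ?orbT // !inE Hin eq_sym neq_b.
Qed.

Theorem mainTheorem7 (rho : {fset name}) (C : ctx) (a : name) (al : pfx) (Q : proc) :
  subj al = a -> typed rho (fill C (Pre al Q)) -> a \notin rho -> auth C a.
Proof.
move=> <- /typed_fill_subj_or_auth + notin_rho.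
by rewrite (negbTE notin_rho).
Qed.
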